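(* Let $n\ge 1$, $d_1,\dots,d_n\ge 1$, $L_i\in\mathbb{C}^{d_i\times d_i}$ ($i=1,\dots,n$) and $C_{i,i-1}\in\mathbb{C}^{d_i\times d_{i-1}}$ ($i=2,\dots,n$). Assume: (i) each $L_i$ is invertible and diagonalizable, $L_iV_i=V_i\Lambda_i$ with $V_i$ invertible and $\Lambda_i=\mathrm{diag}(\lambda_{i,1},\dots,\lambda_{i,d_i})$; (ii) $\sigma(L_i)\cap\sigma(L_j)=\emptyset$ for all $i\neq j$; (iii) $\|L_1\|<\|L_2\|<\cdots<\|L_n\|\le 1$. Then for every $i\in\{1,\dots,n\}$, every $x=(x_1,\dots,x_n)\in\mathbb{C}^{d_1}\times\cdots\times\mathbb{C}^{d_n}$ and every integer $t\ge 0$, $$\big\|\Pi_i\circ\mathsf{Lin}^{\circ t}(x)-\Pi_i\circ\mathsf{Nom}^{\circ t}(\mathsf{pert}(x))\big\|\le\sum_{j=1}^{i-1}\|D_{i,j}\|\,\big\|L_j^t\,\mathsf{pert}_j(x_1,\dots,x_j)\big\|\le\Big(\sum_{j=1}^{i-1}\|D_{i,j}\|\,\|\mathsf{pert}_j(x_1,\dots,x_j)\|\Big)\|L_i\|^t$$ (the empty sum being $0$), and $$\lim_{t\to\infty}\frac{\big\|\Pi_i\circ\mathsf{Lin}^{\circ t}(x)-\Pi_i\circ\mathsf{Nom}^{\circ t}(\mathsf{pert}(x))\big\|}{\|L_i\|^t}=0.$$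
   Context: Each $\mathbb{C}^{d_i}$ carries a fixed norm $\|\cdot\|$, and matrices carry the induced operator norm. $\Pi_i:\mathbb{C}^{d_1}\times\cdots\times\mathbb{C}^{d_n}\to\mathbb{C}^{d_i}$ is the canonical projection $\Pi_i(x_1,\dots,x_n)=x_i$. The linear chained cascade map is $\mathsf{Lin}(x_1,\dots,x_n)=(L_1x_1,\;L_2x_2+C_{2,1}x_1,\;\dots,\;L_nx_n+C_{n,n-1}x_{n-1})$ and the nominal map is $\mathsf{Nom}(x_1,\dots,x_n)=(L_1x_1,\dots,L_nx_n)$; $\mathsf{F}^{\circ t}$ denotes the $t$-fold iterate (identity for $t=0$). Matrices $D_{i,j}\in\mathbb{C}^{d_i\times d_j}$ ($1\le j\le i\le n$) are defined recursively in $i$: $D_{i,i}=I_{d_i}$; for $i\ge 2$ and $1\le j\le i-1$, let $\tilde C_{i,j}\in\mathbb{C}^{d_i\times d_j}$ have entries $[\tilde C_{i,j}]_{\ell,m}=[V_i^{-1}C_{i,i-1}D_{i-1,j}V_j]_{\ell,m}\,(1-\lambda_{j,m}/\lambda_{i,\ell})^{-1}$ and set $D_{i,j}=L_i^{-1}V_i\tilde C_{i,j}V_j^{-1}$. The maps $\mathsf{pert}_i:\mathbb{C}^{d_1}\times\cdots\times\mathbb{C}^{d_i}\to\mathbb{C}^{d_i}$ are defined recursively by $\mathsf{pert}_1(x_1)=x_1$ and $\mathsf{pert}_i(x_1,\dots,x_i)=x_i+\sum_{j=1}^{i-1}(-1)^{i-1-j}D_{i,j}\,\mathsf{pert}_j(x_1,\dots,x_j)$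 for $i\ge 2$, and $\mathsf{pert}(x_1,\dots,x_n)=(\mathsf{pert}_1(x_1),\mathsf{pert}_2(x_1,x_2),\dots,\mathsf{pert}_n(x_1,\dots,x_n))$. *)

From HB Require Import structures.
From mathcomp Require Import all_boot all_order all_algebra.
From mathcomp Require Import all_classical all_reals all_analysis.
From mathcomp Require Import complex.
Set Implicit Arguments.
Unset Strict Implicit.
Unset Printing Implicit Defensive.
Import Order.TTheory GRing.Theory Num.Theory.
Local Open Scope ring_scope.
Local Open Scope classical_set_scope.

(* Conventions: blocks are indexed 0-based by k : nat with k < n (paper's index k+1).
   A vector x in C^{d_0} x ... x C^{d_{n-1}} is a dependent function
   x : forall k : nat, 'cV_(d k) (components k >= n are irrelevant). *)

Section Cascade.
Variable R : realType.
Local Notation C := (complex R).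
Variable d : nat -> nat.

Definition modC (c : C) : R := ComplexField.Normc.normc c.

Definition is_norm (m : nat) (N : 'cV[C]_m -> R) : Prop :=
  [/\ forall x, N x = 0 -> x = 0,
      forall (c : C) x, N (c *: x) = modC c * N x &
      forall x y, N (x + y) <= N x + N y].

Definition opnorm (m1 m2 : nat) (N1 : 'cV[C]_m1 -> R) (N2 : 'cV[C]_m2 -> R)
  (A : 'M[C]_(m1, m2)) : R :=
  sup [set r : R | exists x : 'cV[C]_m2, N2 x <= 1 /\ r = N1 (A *m x)].

Variables (L : forall k : nat, 'M[C]_(d k))
          (Cc : forall k : nat, 'M[C]_(d k.+1, d k)) (* Cc k = C_{k+1,k} *)
          (V : forall k : nat, 'M[C]_(d k))
          (lam : forall k : nat, 'I_(d k) -> C).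

Fixpoint Dm (k : nat) : forall j : nat, 'M[C]_(d k, d j) :=
  match k with
  | 0 => fun j => conform_mx 0 (1%:M : 'M[C]_(d 0))
  | k'.+1 => fun j =>
      if j == k'.+1 then conform_mx 0 (1%:M : 'M[C]_(d k'.+1)) else
      let M := invmx (V k'.+1) *m Cc k' *m Dm k' j *m V j in
      let Ct := \matrix_(l < d k'.+1, m < d j)
                   (M l m * (1 - @lam j m / @lam k'.+1 l)^-1) in
      invmx (L k'.+1) *m V k'.+1 *m Ct *m invmx (V j)
  end.

(* pert_k (x_0,...,x_k) = x_k + sum_{j<k} (-1)^(k-1-j) D_{k,j} pert_j(x_0..x_j),
   computed with fuel: pert_aux f k = pert_k whenever f >= k. *)
Fixpoint pert_aux (x : forall k : nat, 'cV[C]_(d k)) (f : nat)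
  : forall k : nat, 'cV[C]_(d k) :=
  match f with
  | 0 => fun k => x k
  | f'.+1 => fun k =>
      x k + \sum_(j < k) ((-1) ^+ (k.-1 - j) *: (Dm k j *m pert_aux x f' j))
  end.

Definition pert (x : forall k : nat, 'cV[C]_(d k)) (k : nat) : 'cV[C]_(d k) :=
  pert_aux x k k.

Definition Lin (x : forall k : nat, 'cV[C]_(d k)) : forall k : nat, 'cV[C]_(d k) :=
  fun k => match k return 'cV[C]_(d k) with
           | 0 => L 0 *m x 0
           | k'.+1 => L k'.+1 *m x k'.+1 + Cc k' *m x k'
           end.

Definition Nom (x : forall k : nat, 'cV[C]_(d k)) : forall k : nat, 'cV[C]_(d k) :=
  fun k => L k *m x k.

End Cascade.

From HB Require Import structures.
From mathcomp Require Import all_boot all_order all_algebra.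
From mathcomp Require Import all_classical all_reals all_analysis.
From mathcomp Require Import complex.
From mathcomp Require Import zify ring lra.
Import Order.TTheory GRing.Theory Num.Theory numFieldNormedType.Exports.
Local Open Scope ring_scope.
Local Open Scope classical_set_scope.
Set Implicit Arguments.
Unset Strict Implicit.
Unset Printing Implicit Defensive.

(* The matrices D_{k,j} solve the Sylvester equations
     L_{k+1} D_{k+1,j} - D_{k+1,j} L_j = C_{k+1,k} D_{k,j}:
   in the eigenbases of L_{k+1} and L_j the equation decouples entrywise, and the
   factors 1 - lambda_{j,m} / lambda_{k+1,l} are invertible because L_{k+1} is
   invertible and the spectra are disjoint.  By induction on t this yields
     Pi_k Lin^t x = L_k^t pert_k x - sum_{j<k} (-1)^(k-1-j) D_{k,j} L_j^t pert_j x,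
   so the gap to Nom^t (pert x) is bounded termwise by
   |D_{k,j}| |L_j^t pert_j x| <= |D_{k,j}| |pert_j x| |L_j|^t, and |L_j| <= |L_{k-1}| < |L_k|
   makes its ratio to |L_k|^t decay geometrically.  Operator norms are finite
   because every norm on C^m dominates the coordinates, by compactness of the unit
   sphere of R^(2m). *)

Lemma mulmx_exprS (F : pzRingType) m (A : 'M[F]_m) t (v : 'cV[F]_m) :
  A ^+ t.+1 *m v = A *m (A ^+ t *m v).
Proof. by rewrite exprS -mulmxE mulmxA. Qed.

Lemma unitmx_eigenvalue_neq0 (F : fieldType) m (A : 'M[F]_m) c :
  A \in unitmx -> eigenvalue A c -> c != 0.
Proof.
move=> uA /eigenvalueP [v vA]; apply: contraNneq => c0.
by rewrite -[v](mulmxK uA) vA c0 scale0r mul0mx.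
Qed.

Section Diagonalizable.
Variables (F : fieldType) (m : nat) (A P : 'M[F]_m) (a : 'I_m -> F).
Hypotheses (uP : P \in unitmx) (AP : A *m P = P *m diag_mx (\row_l a l)).

Lemma invmx_mulmx_diag : invmx P *m A = diag_mx (\row_l a l) *m invmx P.
Proof. by rewrite -[LHS](mulmxK uP) -(mulmxA (invmx P)) AP !mulmxA mulVmx // mul1mx. Qed.

Lemma eigenvalue_diag l : eigenvalue A (a l).
Proof.
apply/eigenvalueP; exists (delta_mx 0 l *m invmx P).
  rewrite -mulmxA invmx_mulmx_diag mulmxA scalemxAl; congr (_ *m _).
  apply/matrixP => i j; rewrite mul_mx_diag !mxE.
  by have [->|_] := eqVneq j l; rewrite ?andbF ?mul0r ?mulr0 // mulrC.
apply: contra_neq (@oner_neq0 F) => /(congr1 (mulmx^~ P)).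
by rewrite mulmxKV // mul0mx => /matrixP /(_ 0 l); rewrite !mxE !eqxx.
Qed.

Lemma invmx_mulmx_eigenbasis : A \in unitmx -> invmx A *m P = P *m diag_mx (\row_l (a l)^-1).
Proof.
move=> uA; have a0 l := unitmx_eigenvalue_neq0 uA (eigenvalue_diag l).
have diagK : diag_mx (\row_l a l) *m diag_mx (\row_l (a l)^-1) = 1%:M.
  apply/matrixP => i j; rewrite mul_diag_mx !mxE.
  by have [->|] := eqVneq i j; rewrite ?mulr0 // mulfV.
by rewrite -[RHS](mulKmx uA) [A *m (P *m _)]mulmxA AP -mulmxA diagK mulmx1.
Qed.

End Diagonalizable.

Lemma sylvester_diagonalizable (F : fieldType) p q (A : 'M[F]_p) (B : 'M[F]_q)
    (P : 'M[F]_p) (Q : 'M[F]_q) (a : 'I_p -> F) (b : 'I_q -> F) (E : 'M[F]_(p, q)) :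
  A \in unitmx -> P \in unitmx -> Q \in unitmx ->
  A *m P = P *m diag_mx (\row_l a l) -> B *m Q = Q *m diag_mx (\row_m b m) ->
  (forall l m, b m != a l) ->
  let X := invmx A *m P *m
      (\matrix_(l, m) ((invmx P *m E *m Q) l m * (1 - b m / a l)^-1)) *m invmx Q in
  A *m X - X *m B = E.
Proof.
move=> uA uP uQ AP BQ ab X.
have a0 l : a l != 0 := unitmx_eigenvalue_neq0 uA (eigenvalue_diag uP AP l).
rewrite {}/X; set M := invmx P *m E *m Q; set Ct := \matrix_(l, m) _.
have AX : A *m (invmx A *m P *m Ct *m invmx Q) = P *m Ct *m invmx Q.
  by rewrite !mulmxA mulmxV // mul1mx.
have XB : invmx A *m P *m Ct *m invmx Q *m B =
    P *m (diag_mx (\row_l (a l)^-1) *m Ct *m diag_mx (\row_m b m)) *m invmx Q.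
  by rewrite -mulmxA (invmx_mulmx_diag uQ BQ) (invmx_mulmx_eigenbasis uP AP uA) !mulmxA.
rewrite AX XB -mulmxBl -mulmxBr.
have -> : Ct - diag_mx (\row_l (a l)^-1) *m Ct *m diag_mx (\row_m b m) = M.
  apply/matrixP => l m; rewrite mxE [in RHS]mxE mul_mx_diag mxE mul_diag_mx !mxE.
  by field; rewrite a0 subr_eq0 eq_sym ab.
by rewrite /M !mulmxA mulmxV // mul1mx -mulmxA mulmxV // mulmx1.
Qed.

Section ModC.
Variable R : realType.

Lemma modCE (a b : R) : modC (a +i* b)%C = Num.sqrt (a ^+ 2 + b ^+ 2).
Proof. by []. Qed.

Lemma modC0 : modC (0 : complex R) = 0.
Proof. exact: ComplexField.Normc.normc0. Qed.

Lemma modCR (r : R) : modC (r%:C)%C = `|r|.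
Proof. by rewrite -[(r%:C)%C]/(r +i* 0)%C modCE expr0n addr0 sqrtr_sqr. Qed.

Lemma modCN1 : modC (-1 : complex R) = 1.
Proof. by rewrite -[-1]/((-1) +i* (-0))%C modCE oppr0 expr0n addr0 sqrrN expr1n sqrtr1. Qed.

Lemma modC_le_Re_Im (a b : R) : modC (a +i* b)%C <= `|a| + `|b|.
Proof.
rewrite modCE -[leRHS]ger0_norm ?addr_ge0 // -sqrtr_sqr ler_sqrt ?sqr_ge0 //.
rewrite sqrrD -[a ^+ 2](real_normK (num_real a)) -[b ^+ 2](real_normK (num_real b)).
by rewrite addrAC lerDl mulrn_wge0 ?mulr_ge0.
Qed.

End ModC.

Section NormFacts.
Variables (R : realType) (m : nat) (N : 'cV[complex R]_m -> R).
Hypothesis normN : is_norm N.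

Lemma nrm_eq0 x : N x = 0 -> x = 0.
Proof. by have [+ _ _] := normN; apply. Qed.

Lemma nrmZ c x : N (c *: x) = modC c * N x.
Proof. by have [_ + _] := normN; apply. Qed.

Lemma ler_nrmD x y : N (x + y) <= N x + N y.
Proof. by have [_ _ +] := normN; apply. Qed.

Lemma nrm0 : N 0 = 0.
Proof. by rewrite -(scale0r (0 : 'cV_m)) nrmZ modC0 mul0r. Qed.

Lemma nrmN x : N (- x) = N x.
Proof. by rewrite -scaleN1r nrmZ modCN1 mul1r. Qed.

Lemma nrm_sign k x : N ((-1) ^+ k *: x) = N x.
Proof. by rewrite -signr_odd; case: (odd k); rewrite ?scaleN1r ?scale1r ?nrmN. Qed.

Lemma nrm_ge0 x : 0 <= N x.
Proof.
by have := ler_nrmD x (- x); rewrite subrr nrm0 nrmN => ?; lra.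
Qed.

Lemma ler_nrm_sum (I : finType) (f : I -> 'cV[complex R]_m) :
  N (\sum_i f i) <= \sum_i N (f i).
Proof.
elim/big_rec2: _ => [|i y1 y2 _ H]; first by rewrite nrm0.
by apply: le_trans (ler_nrmD _ _) _; rewrite lerD2l.
Qed.

Lemma ler_dist_nrm x y : `|N x - N y| <= N (x - y).
Proof.
have := ler_nrmD (x - y) y; have := ler_nrmD (y - x) x.
rewrite !subrK -opprB nrmN => h1 h2.
by rewrite ler_norml; apply/andP; split; lra.
Qed.

End NormFacts.

Lemma lipschitz_continuous (R : realType) p (f : 'rV[R]_p -> R) (K : R) : 0 < K ->
  (forall v w, `|f v - f w| <= K * `|v - w|) -> continuous f.
Proof.
move=> K0 fK v s /= /nbhs_ballP [e e0 es]; apply/nbhs_ballP.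
exists (e / K) => [|w]; first by rewrite /= divr_gt0.
rewrite -!ball_normE /= => vw; apply: es; rewrite -ball_normE /=.
by apply: le_lt_trans (fK v w) _; rewrite -ltr_pdivlMl // mulrC.
Qed.

Lemma compact_unit_sphere (R : realType) p : compact [set v : 'rV[R]_p | `|v| = 1].
Proof.
apply: bounded_closed_compact.
  by exists 1; split; [exact: num_real | move=> M M1 v /= ->; exact: ltW].
apply: (@preimage_closed _ _ _ [set r : R | r = 1]); last exact: closed_eq.
by move=> v _; exact: norm_continuous.
Qed.

Lemma mx_norm_dominated (R : realType) p (f : 'rV[R]_p -> R) :
  continuous f -> (forall v, 0 <= f v) -> (forall v, f v = 0 -> v = 0) ->
  (forall (r : R) v, f (r *: v) = `|r| * f v) ->
  exists2 M, 0 <= M & forall v, `|v| <= M * f v.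
Proof.
move=> fC fge0 f0 fZ.
have [[w w0]|no0] := pselect (exists w : 'rV[R]_p, w != 0); last first.
  exists 0 => // v; rewrite mul0r.
  by have [->|v0] := eqVneq v 0; [rewrite normr0 | case: no0; exists v].
have normalize (v : 'rV[R]_p) : v != 0 -> `| `|v|^-1 *: v| = 1.
  by move=> v0; rewrite normrZ normfV normr_id mulVf ?normr_eq0.
have [c] := EVT_min_rV (ex_intro _ _ (normalize w w0)) (@compact_unit_sphere R p)
  (continuous_subspaceT fC).
rewrite inE => c1 cmin.
have fc0 : 0 < f c.
  rewrite lt0r fge0 andbT; apply/eqP => /f0 c0.
  by move: c1; rewrite c0 /= normr0 => /esym/eqP; rewrite oner_eq0.
exists (f c)^-1 => [|v]; first by rewrite invr_ge0 ltW.
have [->|v0] := eqVneq v 0; first by rewrite normr0 mulr_ge0 // invr_ge0 ltW.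
have := cmin _ (mem_set (normalize v v0)).
rewrite fZ normfV normr_id ler_pdivlMl ?normr_gt0 // => le_fc.
by rewrite ler_pdivlMl // mulrC.
Qed.

Lemma cvec_sum_delta (F : pzRingType) m (x : 'cV[F]_m) :
  x = \sum_(i < m) x i 0 *: delta_mx i 0.
Proof. by rewrite {1}(matrix_sum_delta x); apply: eq_bigr => i _; rewrite big_ord1. Qed.

Lemma mx_norm_coord (R : realType) p (u : 'rV[R]_p) j : `|u 0 j| <= `|u|.
Proof.
rewrite [leRHS]/Num.Def.normr /= mx_normrE; apply/bigmax_geP; right => /=.
by exists (0, j).
Qed.

Section ComplexCoordinates.
Variables (R : realType) (m : nat).
Local Notation C := (complex R).

Definition cvec_of_reim (v : 'rV[R]_(m + m)) : 'cV[C]_m :=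
  \col_i (v 0 (lshift m i) +i* v 0 (rshift m i))%C.

Definition reim_of_cvec (x : 'cV[C]_m) : 'rV[R]_(m + m) :=
  \row_j match fintype.split j with inl i => complex.Re (x i 0) | inr i => complex.Im (x i 0) end.

Lemma reim_of_cvecK : cancel reim_of_cvec cvec_of_reim.
Proof.
move=> x; apply/matrixP => i j; rewrite !mxE (unsplitK (inl _ i)) (unsplitK (inr _ i)).
by rewrite (ord1 j); case: (x i 0).
Qed.

Lemma cvec_of_reimB v w : cvec_of_reim (v - w) = cvec_of_reim v - cvec_of_reim w.
Proof. by apply/matrixP => i j; rewrite !mxE. Qed.

Lemma cvec_of_reimZ (r : R) v : cvec_of_reim (r *: v) = (r%:C)%C *: cvec_of_reim v.
Proof.
apply/matrixP => i j; rewrite !mxE.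
by apply/eqP; rewrite eq_complex /= !mul0r subr0 addr0 !eqxx.
Qed.

Lemma cvec_of_reim_eq0 v : cvec_of_reim v = 0 -> v = 0.
Proof.
move=> /matrixP v0; apply/matrixP => i j; rewrite (ord1 i) mxE.
rewrite -(splitK j).
by case: (fintype.split j) => k; have := v0 k 0; rewrite !mxE => -[? ?].
Qed.

Variable N : 'cV[C]_m -> R.
Hypothesis normN : is_norm N.

Lemma nrm_coord_le :
  exists2 M, 0 <= M & forall (x : 'cV[C]_m) i, modC (x i 0) <= M * N x.
Proof.
set K := \sum_(i < m) N (delta_mx i 0).
have K0 : 0 <= K by rewrite sumr_ge0 // => i _; exact: nrm_ge0.
have le_reimK v : N (cvec_of_reim v) <= 2 * K * `|v|.
  rewrite {1}(cvec_sum_delta (cvec_of_reim v)); apply: le_trans (ler_nrm_sum normN _) _.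
  rewrite mulrAC mulr_sumr; apply: ler_sum => i _.
  rewrite (nrmZ normN) mxE ler_wpM2r ?(nrm_ge0 normN) //.
  apply: le_trans (modC_le_Re_Im _ _) _.
  by rewrite mulr_natl mulr2n lerD // mx_norm_coord.
have [M M0 HM] : exists2 M, 0 <= M & forall v, `|v| <= M * N (cvec_of_reim v).
  apply: mx_norm_dominated => [|v|v /(nrm_eq0 normN)/cvec_of_reim_eq0 //|r v].
  - apply: (@lipschitz_continuous _ _ _ (2 * K + 1)) => [|v w].
      by rewrite ltr_wpDl ?mulr_ge0.
    apply: le_trans (ler_dist_nrm normN _ _) _.
    rewrite -cvec_of_reimB; apply: le_trans (le_reimK _) _.
    by rewrite ler_wpM2r // lerDl.
  - exact: nrm_ge0.
  - by rewrite cvec_of_reimZ (nrmZ normN) modCR.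
exists (2 * M) => [|x i]; first by rewrite mulr_ge0.
have := HM (reim_of_cvec x); rewrite reim_of_cvecK => le_xM.
have /matrixP /(_ i 0) := reim_of_cvecK x; rewrite mxE => <-.
apply: le_trans (modC_le_Re_Im _ _) _.
by rewrite -mulrA mulr_natl mulr2n lerD // (le_trans (mx_norm_coord _ _)).
Qed.

End ComplexCoordinates.

Section OperatorNorm.
Variables (R : realType) (m1 m2 : nat).
Variables (N1 : 'cV[complex R]_m1 -> R) (N2 : 'cV[complex R]_m2 -> R).
Hypotheses (normN1 : is_norm N1) (normN2 : is_norm N2).
Variable A : 'M[complex R]_(m1, m2).

Lemma nrm_mulmx_bounded : exists2 B, 0 <= B & forall x, N1 (A *m x) <= B * N2 x.
Proof.
have [M M0 coordM] := nrm_coord_le normN2.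
exists (M * \sum_i N1 (A *m delta_mx i 0)) => [|x].
  by rewrite mulr_ge0 // sumr_ge0 // => i _; exact: nrm_ge0.
rewrite {1}(cvec_sum_delta x) mulmx_sumr; apply: le_trans (ler_nrm_sum normN1 _) _.
rewrite mulrAC mulr_sumr; apply: ler_sum => i _.
by rewrite -scalemxAr (nrmZ normN1) ler_wpM2r ?(nrm_ge0 normN1).
Qed.

Lemma opnorm_ub x : N2 x <= 1 -> N1 (A *m x) <= opnorm N1 N2 A.
Proof.
move=> x1; apply: sup_upper_bound; last by exists x.
have [B B0 AB] := nrm_mulmx_bounded.
split; first by exists (N1 (A *m x)), x.
exists B => _ [y [y1 ->]]; apply: le_trans (AB y) _.
by rewrite ler_piMr.
Qed.

Lemma opnorm_ge0 : 0 <= opnorm N1 N2 A.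
Proof.
by have := opnorm_ub (x := 0); rewrite mulmx0 !nrm0 //; apply.
Qed.

Lemma ler_opnorm y : N1 (A *m y) <= opnorm N1 N2 A * N2 y.
Proof.
have [->|y0] := eqVneq y 0; first by rewrite mulmx0 !nrm0 // mulr0.
have Ny0 : 0 < N2 y by rewrite lt0r nrm_ge0 // andbT; apply: contra_neq y0; exact: nrm_eq0.
have Ny_inv : `|(N2 y)^-1| = (N2 y)^-1 by rewrite ger0_norm // invr_ge0 ltW.
have := opnorm_ub (x := ((N2 y)^-1)%:C%C *: y).
rewrite -scalemxAr !(nrmZ _) // modCR Ny_inv mulVf ?gt_eqF // lexx => /(_ isT).
by rewrite ler_pdivrMl // mulrC.
Qed.

End OperatorNorm.

Lemma nrm_mxpow_le (R : realType) m (N : 'cV[complex R]_m -> R) : is_norm N ->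
  forall (A : 'M[complex R]_m) t v, N (A ^+ t *m v) <= opnorm N N A ^+ t * N v.
Proof.
move=> normN A; elim=> [|t IH] v; first by rewrite !expr0 mul1mx mul1r.
rewrite mulmx_exprS exprS -mulrA; apply: le_trans (ler_opnorm normN normN _ _) _.
by rewrite ler_wpM2l ?opnorm_ge0.
Qed.

Lemma cvg_div_expr_dominated (R : realType) (u : nat -> R) (c a b : R) :
  0 <= a < b -> (forall t, 0 <= u t <= c * a ^+ t) ->
  (fun t : nat => u t / b ^+ t) @ \oo --> (0 : R).
Proof.
move=> /andP[a0 ab] u_le; have b0 : 0 < b := le_lt_trans a0 ab.
apply: (@squeeze_cvgr _ _ _ _ (fun=> 0) (fun t => c * (a / b) ^+ t)).
- apply: nearW => t; have /andP[u0 uc] := u_le t.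
  rewrite divr_ge0 ?exprn_ge0 ?(ltW b0) //=.
  by rewrite expr_div_n mulrA ler_pM2r ?invr_gt0 ?exprn_gt0.
- exact: cvg_cst.
- rewrite -(mulr0 c); apply: cvgMl_tmp; apply: cvg_expr.
  by rewrite ger0_norm ?divr_ge0 ?(ltW b0) // ltr_pdivrMr // mul1r.
Qed.

Section Cascade.
Local Unset Implicit Arguments.
Variables (R : realType) (d : nat -> nat).
Local Notation C := (complex R).
Variables (L : forall k, 'M[C]_(d k)) (Cc : forall k, 'M[C]_(d k.+1, d k))
          (V : forall k, 'M[C]_(d k)) (lam : forall k, 'I_(d k) -> C).
Variable n : nat.
Hypothesis diagL : forall k, (k < n)%N ->
  [/\ L k \in unitmx, V k \in unitmx & L k *m V k = V k *m diag_mx (\row_m lam k m)].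
Hypothesis spectraL : forall k j, (k < n)%N -> (j < n)%N -> k != j ->
  forall a, eigenvalue (L k) a -> ~~ eigenvalue (L j) a.
Variable x : forall k, 'cV[C]_(d k).
Variable N : forall k, 'cV[C]_(d k) -> R.
Hypothesis normN : forall k, (k < n)%N -> is_norm (N k).
Local Notation rho k := (opnorm (N k) (N k) (L k)).
Hypothesis rho_increasing : forall k, (k.+1 < n)%N -> rho k < rho k.+1.
Local Set Implicit Arguments.
Local Notation D := (Dm L Cc V lam).
Local Notation p := (pert L Cc V lam x).

Lemma Dm_id k : D k k = 1%:M.
Proof. by case: k => [|k] /=; rewrite ?eqxx conform_mx_id. Qed.

Lemma DmS k j : j != k.+1 ->
  D k.+1 j = invmx (L k.+1) *m V k.+1 *m
    (\matrix_(l, m) ((invmx (V k.+1) *m Cc k *m D k j *m V j) l m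
                     * (1 - lam j m / lam k.+1 l)^-1)) *m invmx (V j).
Proof. by move=> /negbTE /= ->. Qed.

Lemma pert_aux_fuel f g k : (k <= f)%N -> (k <= g)%N ->
  pert_aux L Cc V lam x f k = pert_aux L Cc V lam x g k.
Proof.
elim: f g k => [|f IH] [|g] k //=; rewrite ?leqn0.
- by move=> /eqP -> _; rewrite big_ord0 addr0.
- by move=> _ /eqP ->; rewrite big_ord0 addr0.
- move=> kf kg; congr (_ + _); apply: eq_bigr => j _; congr (_ *: (_ *m _)).
  by apply: IH; rewrite -ltnS (leq_trans (ltn_ord j)).
Qed.

Lemma pertE k : p k = x k + \sum_(j < k) (-1) ^+ (k.-1 - j) *: (D k j *m p j).
Proof.
case: k => [|k]; first by rewrite /pert big_ord0 addr0.
congr (_ + _); apply: eq_bigr => j _; congr (_ *: (_ *m _)).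
by apply: pert_aux_fuel; rewrite -ltnS.
Qed.

Lemma iter_Nom y t k : iter t (Nom L) y k = L k ^+ t *m y k.
Proof.
elim: t => [|t IH]; first by rewrite expr0 mul1mx.
by rewrite iterS /Nom IH mulmx_exprS.
Qed.

Lemma Dm_sylvester k j : (j <= k)%N -> (k.+1 < n)%N ->
  L k.+1 *m D k.+1 j - D k.+1 j *m L j = Cc k *m D k j.
Proof.
move=> jk kn; have jn : (j < n)%N by rewrite (leq_ltn_trans jk) // ltnW.
have [uLk uVk Lk] := diagL _ kn; have [_ uVj Lj] := diagL _ jn.
have lam_neq l m : lam j m != lam k.+1 l.
  have kj : k.+1 != j by rewrite gtn_eqF.
  apply: contraTneq (spectraL _ _ kn jn kj _ (eigenvalue_diag uVk Lk l)) => <-.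
  by rewrite negbK (eigenvalue_diag uVj Lj).
rewrite DmS ?ltn_eqF // -(mulmxA (invmx (V k.+1))).
exact: (sylvester_diagonalizable _ uLk uVk uVj Lk Lj lam_neq).
Qed.

Definition coupling t k : 'cV[C]_(d k) :=
  \sum_(j < k) (-1) ^+ (k.-1 - j) *: (D k j *m (L j ^+ t *m p j)).

Lemma coupling_step t k : (k.+1 < n)%N ->
  coupling t.+1 k.+1 = L k.+1 *m coupling t k.+1 - Cc k *m (L k ^+ t *m p k - coupling t k).
Proof.
move=> kn.
have step (j : 'I_k.+1) : D k.+1 j *m (L j ^+ t.+1 *m p j) =
    L k.+1 *m (D k.+1 j *m (L j ^+ t *m p j)) - Cc k *m (D k j *m (L j ^+ t *m p j)).
  rewrite mulmx_exprS !mulmxA -!mulmxBl -(Dm_sylvester _ kn) ?subKr //.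
  by rewrite -ltnS.
rewrite /coupling; under eq_bigr => j _ do rewrite step scalerBr scalemxAr.
rewrite sumrB -mulmx_sumr; congr (_ - _).
rewrite big_ord_recr subnn expr0 scale1r Dm_id mul1mx mulmxBr [RHS]addrC.
congr (_ + _); rewrite mulmx_sumr -sumrN; apply: eq_bigr => j _.
have -> : (k - j = (k.-1 - j).+1)%N by move: (ltn_ord j); lia.
by rewrite exprS mulN1r scaleNr scalemxAr.
Qed.

Lemma iter_Lin t k : (k < n)%N -> iter t (Lin L Cc) x k = L k ^+ t *m p k - coupling t k.
Proof.
elim: t k => [|t IH] k kn.
  rewrite /coupling; under eq_bigr do rewrite expr0 mul1mx.
  by rewrite expr0 mul1mx pertE addrK.
rewrite iterS; case: k kn => [|k] kn.
  by rewrite [Lin _ _ _ _]/= IH // /coupling !big_ord0 !subr0 mulmx_exprS.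
rewrite [Lin _ _ _ _]/= !IH ?(ltnW kn) // coupling_step // mulmx_exprS mulmxBr opprB.
by rewrite addrA addrAC.
Qed.

Lemma rho_le j k : (j <= k)%N -> (k < n)%N -> rho j <= rho k.
Proof.
move=> jk kn; have jn := leq_ltn_trans jk kn.
apply: (@homo_leq_in _ [pred i | (i < n)%N] (fun i => rho i) _ lexx le_trans) => //.
- by move=> i l _; rewrite !inE => ln h /andP[_ hl]; exact: ltn_trans hl ln.
- by move=> i _; rewrite inE => /(rho_increasing i)/ltW.
Qed.

Lemma gap_coupling t k : (k < n)%N ->
  N k (iter t (Lin L Cc) x k - iter t (Nom L) p k) = N k (coupling t k).
Proof.
by move=> kn; rewrite iter_Lin // iter_Nom addrAC subrr add0r (nrmN (normN _ kn)).
Qed.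

Lemma gap_le_sum t k : (k < n)%N ->
  N k (iter t (Lin L Cc) x k - iter t (Nom L) p k)
    <= \sum_(j < k) opnorm (N k) (N j) (D k j) * N j (L j ^+ t *m p j).
Proof.
move=> kn; have Nk := normN _ kn.
rewrite gap_coupling //; apply: le_trans (ler_nrm_sum Nk _) _; apply: ler_sum => j _.
have Nj := normN _ (ltn_trans (ltn_ord j) kn).
by rewrite (nrm_sign Nk) (ler_opnorm Nk Nj).
Qed.

Lemma sum_le_expr t k r : (k < n)%N -> (forall j, (j < k)%N -> rho j <= r) ->
  \sum_(j < k) opnorm (N k) (N j) (D k j) * N j (L j ^+ t *m p j)
    <= (\sum_(j < k) opnorm (N k) (N j) (D k j) * N j (p j)) * r ^+ t.
Proof.
move=> kn rho_r; rewrite mulr_suml; apply: ler_sum => j _.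
have Nk := normN _ kn; have Nj := normN _ (ltn_trans (ltn_ord j) kn).
have rho_jr := rho_r j (ltn_ord j); have rho_j0 := opnorm_ge0 Nj Nj (L j).
rewrite -mulrA ler_wpM2l ?(opnorm_ge0 Nk Nj) //.
apply: le_trans (nrm_mxpow_le Nj (L j) t (p j)) _.
rewrite mulrC ler_wpM2l ?(nrm_ge0 Nj) // lerXn2r // nnegrE //.
exact: le_trans rho_jr.
Qed.

Lemma gap_ratio_cvg0 k : (k < n)%N ->
  (fun t : nat => N k (iter t (Lin L Cc) x k - iter t (Nom L) p k) / rho k ^+ t)
    @ \oo --> (0 : R).
Proof.
move=> kn; have Nk := normN _ kn.
case: k kn Nk => [|k] kn Nk.
  under eq_fun do rewrite gap_coupling // /coupling big_ord0 (nrm0 Nk) mul0r.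
  exact: cvg_cst.
apply: (@cvg_div_expr_dominated _ _
  (\sum_(j < k.+1) opnorm (N k.+1) (N j) (D k.+1 j) * N j (p j)) (rho k)).
  have Nk' := normN _ (ltnW kn).
  by rewrite (opnorm_ge0 Nk' Nk') rho_increasing.
move=> t; rewrite (nrm_ge0 Nk) /=.
apply: le_trans (gap_le_sum t kn) (sum_le_expr t kn _) => j jk.
exact: rho_le (ltnSE jk) (ltnW kn).
Qed.

End Cascade.

Theorem theorem1 (R : realType) (n : nat) (d : nat -> nat)
  (N : forall k : nat, 'cV[complex R]_(d k) -> R)
  (L : forall k : nat, 'M[complex R]_(d k))
  (Cc : forall k : nat, 'M[complex R]_(d k.+1, d k))
  (V : forall k : nat, 'M[complex R]_(d k))
  (lam : forall k : nat, 'I_(d k) -> complex R) :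
  (0 < n)%N ->
  (forall k, (k < n)%N -> (0 < d k)%N) ->
  (forall k, (k < n)%N -> is_norm (N k)) ->
  (* (i) *)
  (forall k, (k < n)%N ->
     [/\ L k \in unitmx, V k \in unitmx &
         L k *m V k = V k *m diag_mx (\row_m lam k m)]) ->
  (* (ii) *)
  (forall k j, (k < n)%N -> (j < n)%N -> k != j ->
     forall a, eigenvalue (L k) a -> ~~ eigenvalue (L j) a) ->
  (* (iii) *)
  (forall k, (k.+1 < n)%N -> opnorm (N k) (N k) (L k) < opnorm (N k.+1) (N k.+1) (L k.+1)) ->
  opnorm (N n.-1) (N n.-1) (L n.-1) <= 1 ->
  forall k, (k < n)%N ->
  forall x : forall j : nat, 'cV[complex R]_(d j),
    let diff t := N k (iter t (Lin L Cc) x k - iter t (Nom L) (pert L Cc V lam x) k) in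
    (forall t : nat,
       diff t <= \sum_(j < k) opnorm (N k) (N j) (Dm L Cc V lam k j)
                                * N j (L j ^+ t *m pert L Cc V lam x j)
       /\ \sum_(j < k) opnorm (N k) (N j) (Dm L Cc V lam k j)
                                * N j (L j ^+ t *m pert L Cc V lam x j)
          <= (\sum_(j < k) opnorm (N k) (N j) (Dm L Cc V lam k j) * N j (pert L Cc V lam x j))
             * opnorm (N k) (N k) (L k) ^+ t)
    /\ ((fun t : nat => diff t / opnorm (N k) (N k) (L k) ^+ t) @ \oo --> (0 : R)).
Proof.
move=> _ _ normN diagL spectraL rho_increasing _ k kn x /=.
split=> [t|]; last exact: (gap_ratio_cvg0 Cc diagL spectraL x normN rho_increasing kn).
split; first exact: (gap_le_sum Cc diagL spectraL x normN t kn).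
apply: (sum_le_expr Cc V lam x normN t kn) => j jk.
exact: (rho_le rho_increasing (ltnW jk) kn).
Qed.
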